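(* Let $T$ be a strongly dependent complete theory. Let $I=(a_i:i\in[0,1])$ be an indiscernible segment, and let $\phi(x,y)$ be a formula with parameters from $\bar M$ such that $\mu_I(\phi(x,b))=0$ for all $b\in\bar M$. Then there is $k<\omega$ such that $\{\phi(a_i,y):i\in[0,1]\}$ is $k$-inconsistent (every subset of size $k$ is inconsistent).
   Context: Work in a monster model $\bar M$ of $T$. $T$ is strongly dependent if there do NOT exist $L$-formulas $\phi^\alpha(x,y^\alpha)$ ($\alpha<\omega$) and tuples $b^\alpha_i$ ($\alpha,i<\omega$) such that for every $\eta\in\omega^\omega$ the set $\{\phi^\alpha(x,b^\alpha_{\eta(\alpha)}):\alpha<\omega\}\cup\{\neg\phi^\alpha(x,b^\alpha_i):\alpha,i<\omega,\ i\neq\eta(\alpha)\}$ is consistent (this implies NIP). An indiscernible segment is a family $I=(a_i:i\in[0,1])$ indiscernible with respect to the usual order on $[0,1]$. Its global average measure $\mu_I$ is the Keisler measure over $\bar M$ assigning to a formula $\psi(x)$ over $\bar M$ the Lebesgue measure of $\{i\in[0,1]:\models\psi(a_i)\}$. *)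

From HB Require Import structures.
From mathcomp Require Import all_boot all_order all_algebra.
From mathcomp Require Import all_classical all_reals all_analysis.
From Stdlib Require List.
Set Implicit Arguments. Unset Strict Implicit. Unset Printing Implicit Defensive.
Import Order.TTheory GRing.Theory Num.Theory.
Local Open Scope classical_set_scope.
Local Open Scope ring_scope.

Record signature := Signature {
  fsym : Type; farity : fsym -> nat;
  rsym : Type; rarity : rsym -> nat }.

Inductive term (L : signature) : Type :=
| tvar : nat -> term L
| tapp (f : fsym L) : ('I_(farity f) -> term L) -> term L.

Inductive formula (L : signature) : Type :=
| fFalse : formula L
| fEq : term L -> term L -> formula L
| fRel (r : rsym L) : ('I_(rarity r) -> term L) -> formula L
| fNot : formula L -> formula L
| fAnd : formula L -> formula L -> formula L
| fEx : nat -> formula L -> formula L.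

(* An L-structure (nonempty: dflt is some element). *)
Record structure (L : signature) := Structure {
  carrier :> Type;
  dflt : carrier;
  interp_f : forall f : fsym L, ('I_(farity f) -> carrier) -> carrier;
  interp_r : forall r : rsym L, ('I_(rarity r) -> carrier) -> Prop }.

Section Semantics.
Variables (L : signature) (M : structure L).

Fixpoint teval (e : nat -> M) (t : term L) : M :=
  match t with
  | tvar v => e v
  | tapp f ts => @interp_f _ M f (fun i => teval e (ts i))
  end.

Definition upd (e : nat -> M) (v : nat) (m : M) : nat -> M :=
  fun w => if w == v then m else e w.

Fixpoint holds (e : nat -> M) (phi : formula L) : Prop :=
  match phi with
  | fFalse => False
  | fEq t1 t2 => teval e t1 = teval e t2
  | fRel r ts => @interp_r _ M r (fun i => teval e (ts i))
  | fNot psi => ~ holds e psi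
  | fAnd psi chi => holds e psi /\ holds e chi
  | fEx v psi => exists m : M, holds (upd e v m) psi
  end.

Fixpoint term_vars_in (P : pred nat) (t : term L) : Prop :=
  match t with
  | tvar v => P v
  | tapp f ts => forall i, term_vars_in P (ts i)
  end.

Fixpoint fv_in (P : pred nat) (phi : formula L) : Prop :=
  match phi with
  | fFalse => True
  | fEq t1 t2 => term_vars_in P t1 /\ term_vars_in P t2
  | fRel r ts => forall i, term_vars_in P (ts i)
  | fNot psi => fv_in P psi
  | fAnd psi chi => fv_in P psi /\ fv_in P chi
  | fEx v psi => fv_in (fun w => (w == v) || P w) psi
  end.

(* Assignment: the n-tuple a occupies variables 0..n-1, the remaining
   variables n, n+1, ... are assigned c 0, c 1, ... *)
Definition tup_env (n : nat) (a : 'I_n -> M) (c : nat -> M) : nat -> M :=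
  fun v => if (insub v : option 'I_n) is Some i then a i else c (v - n)%N.

(* A set of conditions on an n-tuple is consistent (with the elementary
   diagram of M): every finite subset of it is realized in M. *)
Definition consistent (n : nat) (J : Type) (P : J -> ('I_n -> M) -> Prop) :=
  forall F : seq J, exists a : 'I_n -> M, forall j, List.In j F -> P j a.

(** Strong dependence of T = Th(M) (consistency in the monster model is
    finite satisfiability in M, by compactness). *)
Definition strongly_dependent : Prop :=
  ~ exists (n : nat) (m : nat -> nat) (phi : nat -> formula L)
           (b : forall alpha : nat, nat -> 'I_(m alpha) -> M),
      (forall alpha, fv_in (fun v => v < n + m alpha)%N (phi alpha)) /\
      forall eta : nat -> nat,
        consistent (fun (j : nat * nat) (x : 'I_n -> M) =>
          let: (alpha, i) := j in
          let h := holds (tup_env x (tup_env (b alpha i) (fun _ => dflt M)))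
                         (phi alpha) in
          if i == eta alpha then h else ~ h).

(** Saturation: a partial type in n variables over a parameter set A
    is a set of pairs (psi, c) where psi has its free variables among
    x_0..x_{n-1} (variables 0..n-1) and parameters c 0 .. c (k-1) from A. *)
Definition type_over (A : set M) (n : nat)
  (Sigma : set (formula L * (nat -> M))) : Prop :=
  forall p, Sigma p -> exists k : nat,
    fv_in (fun v => v < n + k)%N p.1 /\ forall v, (v < k)%N -> A (p.2 v).

Definition fin_sat_type (n : nat) (Sigma : set (formula L * (nat -> M))) :=
  forall F : seq (formula L * (nat -> M)), (forall p, List.In p F -> Sigma p) ->
    exists a : 'I_n -> M, forall p, List.In p F -> holds (tup_env a p.2) p.1.

Definition realized (n : nat) (Sigma : set (formula L * (nat -> M))) :=
  exists a : 'I_n -> M, forall p, Sigma p -> holds (tup_env a p.2) p.1.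

End Semantics.

(** Monster-model hypothesis: M is (2^aleph_0)^+-saturated, i.e. every
    finitely satisfiable type over a parameter set of size at most the
    continuum (= |R| for a realType R) is realized in M. *)
Definition monster (R : realType) (L : signature) (M : structure L) : Prop :=
  forall (A : set M), (A #<= [set: R])%card ->
  forall (n : nat) (Sigma : set (formula L * (nat -> M))),
    type_over A n Sigma -> fin_sat_type n Sigma -> realized n Sigma.

Section Indiscernible.
Variables (R : realType) (L : signature) (M : structure L).

Definition in01 (i : R) : bool := (0 <= i) && (i <= 1).

(* Assignment sending variables q*n .. q*n+n-1 to the tuple a (nth s q)
   for q < size s. *)
Definition seq_env (n : nat) (a : R -> 'I_n -> M) (s : seq R) : nat -> M :=
  fun v => if (v < size s * n)%N then
             (if (insub (v %% n)%N : option 'I_n) is Some r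
              then a (nth 0 s (v %/ n)%N) r else dflt M)
           else dflt M.

Definition indiscernible_segment (n : nat) (a : R -> 'I_n -> M) : Prop :=
  forall (psi : formula L) (s t : seq R),
    size s = size t ->
    fv_in (fun v => v < size s * n)%N psi ->
    sorted <%R s -> sorted <%R t -> all in01 s -> all in01 t ->
    (holds (seq_env a s) psi <-> holds (seq_env a t) psi).

(* mu_I(phi(x,b)) for phi(x,y) with x = variables 0..n-1,
   y = variables n..n+m-1, and parameters c for the remaining variables. *)
Definition avg_measure (n m : nat) (a : R -> 'I_n -> M) (phi : formula L)
  (c : nat -> M) (b : 'I_m -> M) : \bar R :=
  (@lebesgue_measure R) [set i : R | in01 i /\ holds (tup_env (a i) (tup_env b c)) phi].

End Indiscernible.

From HB Require Import structures.
From mathcomp Require Import all_boot all_order all_algebra.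
From mathcomp Require Import all_classical all_reals all_analysis.
From mathcomp Require Import zify.
Import Order.TTheory GRing.Theory Num.Theory.
Local Open Scope classical_set_scope.
Local Open Scope ring_scope.
Set Implicit Arguments. Unset Strict Implicit. Unset Printing Implicit Defensive.

(* Suppose the k-inconsistency fails for every k.  Then for each N there are N+1 points
   p_0 < ... < p_N of the segment and a b with phi(a_{p_l}, b) for all l.  Since
   {i | phi(a_i, b)} is Lebesgue-null, every interval (p_l, p_{l+1}) contains a point
   where phi(a_i, b) fails, so for every S ⊆ {0..N-1} there is an increasing sequence
   u_0 < ... < u_{N-1} with phi(a_{u_q}, b) iff q ∈ S.  By indiscernibility the pattern
   S is then realized along ANY increasing sequence of the segment; taking the single
   sequence 1 - 1/(k+2) and splitting it into infinitely many interleaved rows yields an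
   array witnessing that T is not strongly dependent. *)

Section Syntax.
Variable L : signature.

Lemma term_vars_in_sub (P Q : pred nat) (t : term L) :
  (forall v, P v -> Q v) -> term_vars_in P t -> term_vars_in Q t.
Proof. by move=> PQ; elim: t => [v|f ts IH] /=; [apply: PQ | move=> H i; apply: IH]. Qed.

Lemma fv_in_sub (P Q : pred nat) (phi : formula L) :
  (forall v, P v -> Q v) -> fv_in P phi -> fv_in Q phi.
Proof.
elim: phi P Q => [|t1 t2|r ts|psi IH|psi IH chi IH'|v psi IH] P Q PQ //=.
- by case=> ? ?; split; apply: term_vars_in_sub PQ _.
- by move=> H i; apply: term_vars_in_sub PQ _.
- exact: IH.
- by case=> ? ?; split; [apply: IH PQ _ | apply: IH' PQ _].
- by apply: IH => w /orP[-> | /PQ ->]; rewrite ?orbT.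
Qed.

Lemma term_vars_in_leq (K K' : nat) (t : term L) :
  (K <= K')%N -> term_vars_in (fun v => v < K)%N t -> term_vars_in (fun v => v < K')%N t.
Proof. by move=> KK'; apply: term_vars_in_sub => v /leq_trans; apply. Qed.

Lemma fv_in_leq (K K' : nat) (phi : formula L) :
  (K <= K')%N -> fv_in (fun v => v < K)%N phi -> fv_in (fun v => v < K')%N phi.
Proof. by move=> KK'; apply: fv_in_sub => v /leq_trans; apply. Qed.

Lemma term_vars_in_bounded (t : term L) : exists K, term_vars_in (fun v => v < K)%N t.
Proof.
elim: t => [v|f ts IH] /=; first by exists v.+1.
have [K HK] := fin_all_exists IH.
by exists (\max_i K i)%N => i; apply: term_vars_in_leq (HK i); apply: leq_bigmax.
Qed.

Lemma fv_in_bounded (phi : formula L) : exists K, fv_in (fun v => v < K)%N phi.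
Proof.
elim: phi => [|t1 t2|r ts|psi IH|psi [K1 H1] chi [K2 H2]|v psi [K H]] /=.
- by exists 0%N.
- have [K1 H1] := term_vars_in_bounded t1; have [K2 H2] := term_vars_in_bounded t2.
  exists (maxn K1 K2); split; [apply: term_vars_in_leq _ H1 | apply: term_vars_in_leq _ H2];
    by rewrite ?leq_maxl ?leq_maxr.
- have [K HK] := fin_all_exists (fun i => term_vars_in_bounded (ts i)).
  by exists (\max_i K i)%N => i; apply: term_vars_in_leq (HK i); apply: leq_bigmax.
- exact: IH.
- exists (maxn K1 K2); split; [apply: fv_in_leq _ H1 | apply: fv_in_leq _ H2];
    by rewrite ?leq_maxl ?leq_maxr.
- by exists K; apply: fv_in_sub H => w ->; rewrite orbT.
Qed.

Fixpoint rename_term (s : nat -> nat) (t : term L) : term L :=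
  match t with
  | tvar v => tvar L (s v)
  | tapp f ts => tapp (fun i => rename_term s (ts i))
  end.

Fixpoint rename (s : nat -> nat) (phi : formula L) : formula L :=
  match phi with
  | fFalse => fFalse L
  | fEq t1 t2 => fEq (rename_term s t1) (rename_term s t2)
  | fRel r ts => fRel (fun i => rename_term s (ts i))
  | fNot psi => fNot (rename s psi)
  | fAnd psi chi => fAnd (rename s psi) (rename s chi)
  | fEx v psi => fEx (s v) (rename s psi)
  end.

Lemma term_vars_in_rename (s : nat -> nat) (P Q : pred nat) (t : term L) :
  (forall v, P v -> Q (s v)) -> term_vars_in P t -> term_vars_in Q (rename_term s t).
Proof. by move=> PQ; elim: t => [v|f ts IH] /=; [apply: PQ | move=> H i; apply: IH]. Qed.

Lemma fv_in_rename (s : nat -> nat) (P Q : pred nat) (phi : formula L) :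
  (forall v, P v -> Q (s v)) -> fv_in P phi -> fv_in Q (rename s phi).
Proof.
elim: phi P Q => [|t1 t2|r ts|psi IH|psi IH chi IH'|v psi IH] P Q PQ //=.
- by case=> ? ?; split; apply: term_vars_in_rename PQ _.
- by move=> H i; apply: term_vars_in_rename PQ _.
- exact: IH.
- by case=> ? ?; split; [apply: IH PQ _ | apply: IH' PQ _].
- by apply: IH => w /orP[/eqP-> | /PQ ->]; rewrite ?eqxx ?orbT.
Qed.

Fixpoint exists_vars (vs : seq nat) (psi : formula L) : formula L :=
  if vs is v :: vs' then fEx v (exists_vars vs' psi) else psi.

Lemma fv_in_exists_vars (P : pred nat) (vs : seq nat) (psi : formula L) :
  fv_in (fun w => (w \in vs) || P w) psi -> fv_in P (exists_vars vs psi).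
Proof.
elim: vs P => [|v vs IH] P /=; first by apply: fv_in_sub.
move=> H; apply: IH; apply: fv_in_sub H => w.
by rewrite in_cons; case: (w == v); case: (w \in vs).
Qed.

Fixpoint bigAnd (N : nat) (g : nat -> formula L) : formula L :=
  if N is N'.+1 then fAnd (bigAnd N' g) (g N') else fNot (fFalse L).

Lemma fv_in_bigAnd (P : pred nat) (N : nat) (g : nat -> formula L) :
  (forall j, (j < N)%N -> fv_in P (g j)) -> fv_in P (bigAnd N g).
Proof.
elim: N => [|N IH] H //=.
by split; [apply: IH => j jN; apply: H; apply: ltnW | apply: H].
Qed.

Definition literal (b : bool) (psi : formula L) := if b then psi else fNot psi.

Lemma fv_in_literal (P : pred nat) (b : bool) (psi : formula L) :
  fv_in P psi -> fv_in P (literal b psi).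
Proof. by case: b. Qed.

Section Semantics.
Variable M : structure L.

Lemma teval_agree (P : pred nat) (e1 e2 : nat -> M) (t : term L) :
  term_vars_in P t -> (forall v, P v -> e1 v = e2 v) -> teval e1 t = teval e2 t.
Proof.
move=> + E; elim: t => [v|f ts IH] /=; first exact: E.
by move=> H; congr interp_f; apply: funext => i; apply: IH.
Qed.

Lemma holds_agree (P : pred nat) (e1 e2 : nat -> M) (phi : formula L) :
  fv_in P phi -> (forall v, P v -> e1 v = e2 v) -> (holds e1 phi <-> holds e2 phi).
Proof.
elim: phi P e1 e2 => [|t1 t2|r ts|psi IH|psi IH chi IH'|v psi IH] P e1 e2 /= H E //.
- by case: H => H1 H2; rewrite (teval_agree H1 E) (teval_agree H2 E).
- by rewrite (_ : (fun i => _) = (fun i => teval e2 (ts i)));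
    last by apply: funext => i; apply: teval_agree (H i) E.
- by rewrite (IH P e1 e2 H E).
- by case: H => H1 H2; rewrite (IH P e1 e2 H1 E) (IH' P e1 e2 H2 E).
- have E' x w : (w == v) || P w -> upd e1 v x w = upd e2 v x w.
    by rewrite /upd; case: eqP => //= _ /E.
  by split=> -[x Hx]; exists x; move: Hx; rewrite (IH _ _ _ H (E' x)).
Qed.

Lemma teval_rename (s : nat -> nat) (e : nat -> M) (t : term L) :
  teval e (rename_term s t) = teval (e \o s) t.
Proof. by elim: t => [v|f ts IH] //=; congr interp_f; apply: funext => i. Qed.

Lemma holds_rename (s : nat -> nat) (e : nat -> M) (phi : formula L) :
  injective s -> (holds e (rename s phi) <-> holds (e \o s) phi).
Proof.
move=> s_inj; elim: phi e => [|t1 t2|r ts|psi IH|psi IH chi IH'|v psi IH] e /=.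
- by [].
- by rewrite !teval_rename.
- by rewrite (_ : (fun i => _) = (fun i => teval (e \o s) (ts i)));
    last by apply: funext => i; rewrite teval_rename.
- by rewrite IH.
- by rewrite IH IH'.
- have E x : upd e (s v) x \o s = upd (e \o s) v x.
    by apply: funext => w; rewrite /upd /= (inj_eq s_inj).
  by split=> -[x Hx]; exists x; move: Hx; rewrite IH E.
Qed.

Definition override (e : nat -> M) (vs : seq nat) (f : nat -> M) : nat -> M :=
  fun w => if w \in vs then f w else e w.

Lemma override_cons (e : nat -> M) (v : nat) (vs : seq nat) (f : nat -> M) :
  override (upd e v (f v)) vs f = override e (v :: vs) f.
Proof.
apply: funext => w; rewrite /override /upd in_cons.
by case: (w \in vs); rewrite ?orbT // orbF; case: eqP => // ->.
Qed.

Lemma holds_exists_vars (e : nat -> M) (vs : seq nat) (psi : formula L) :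
  holds e (exists_vars vs psi) <-> exists f, holds (override e vs f) psi.
Proof.
elim: vs e => [|v vs IH] e /=.
  have override_nil f : override e [::] f = e.
    by apply: funext => w; rewrite /override in_nil.
  by split=> [H | [f]]; [exists e | ]; rewrite override_nil.
split=> [[x /IH [f Hf]] | [f Hf]].
  exists (fun w => if w \in vs then f w else x).
  rewrite (_ : override _ _ _ = override (upd e v x) vs f) //.
  apply: funext => w; rewrite /override /upd in_cons.
  by case: (w \in vs); rewrite ?orbT ?orbF //; case: eqP.
by exists (f v); apply/IH; exists f; rewrite override_cons.
Qed.

Lemma holds_bigAnd (e : nat -> M) (N : nat) (g : nat -> formula L) :
  holds e (bigAnd N g) <-> forall j, (j < N)%N -> holds e (g j).
Proof.
elim: N => [|N IH] /=; first by split=> // _ j.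
split=> [[/IH H1 H2] j | H].
  by rewrite ltnS leq_eqVlt => /orP[/eqP-> | /H1].
by split; [apply/IH => j jN; apply: H; apply: ltnW | apply: H].
Qed.

Lemma holds_literal (e : nat -> M) (b : bool) (psi : formula L) :
  holds e (literal b psi) <-> (holds e psi <-> b).
Proof.
case: b => /=; first by split=> // H; apply H.
by split=> H; [split=> // /H | move=> /H].
Qed.

Lemma tup_env_lt (k : nat) (x : 'I_k -> M) (c : nat -> M) (v : nat) (h : (v < k)%N) :
  tup_env x c v = x (Ordinal h).
Proof. by rewrite /tup_env (insubT (fun v => v < k)%N h). Qed.

Lemma tup_env_ge (k : nat) (x : 'I_k -> M) (c : nat -> M) (v : nat) :
  (k <= v)%N -> tup_env x c v = c (v - k)%N.
Proof. by move=> h; rewrite /tup_env insubF // ltnNge h. Qed.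

End Semantics.
End Syntax.

Section Patterns.
Variables (R : realType) (L : signature) (M : structure L).
Variables (n : nat) (a : R -> 'I_n -> M).

Definition increasing_in01 (N : nat) (t : nat -> R) :=
  (forall j, (j.+1 < N)%N -> t j < t j.+1) /\ (forall j, (j < N)%N -> in01 (t j)).

Definition realizes_pattern (phi : formula L) (N : nat) (t : nat -> R) (S : nat -> bool) :=
  exists w : nat -> M, forall q, (q < N)%N -> (holds (tup_env (a (t q)) w) phi <-> S q).

Lemma increasing_in01_mkseq (N : nat) (t : nat -> R) : increasing_in01 N t ->
  sorted <%R (mkseq t N) /\ all (@in01 R) (mkseq t N).
Proof.
case=> t_inc t01; split.
  apply/(sortedP 0) => i; rewrite size_mkseq => hi.
  by rewrite !nth_mkseq //; [apply: t_inc | apply: ltnW].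
by apply/allP => x /mapP [i]; rewrite mem_iota => /andP[_ hi] ->; apply: t01.
Qed.

Lemma seq_env_nth (s : seq R) (q r : nat) (hr : (r < n)%N) :
  (q < size s)%N -> seq_env a s (q * n + r) = a (nth 0 s q) (Ordinal hr).
Proof.
move=> hq; rewrite /seq_env ifT; last first.
  by apply: (@leq_trans (q.+1 * n)); [rewrite mulSn; lia | rewrite leq_mul2r hq orbT].
have n_gt0 : (0 < n)%N by apply: leq_ltn_trans hr.
rewrite modnMDl (modn_small hr) divnMDl // (divn_small hr) addn0.
by rewrite (insubT (fun v => v < n)%N hr).
Qed.

Section PatternFormula.
Variables (phi : formula L) (W : nat).
Hypothesis phi_fv : fv_in (fun v => v < n + W)%N phi.
Variables (N : nat) (S : nat -> bool).

(* Copy [q] of [phi] reads its [x]-variables from the [q]-th block of [seq_env], and all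
   copies share their parameter variables, which are moved past the [N] blocks and then
   existentially quantified. *)
Definition block_shift (q v : nat) : nat :=
  if (v < n)%N then (q * n + v)%N else (N * n + v)%N.

Definition param_vars : seq nat := map (addn (N * n + n)) (iota 0 W).

Definition pattern_formula : formula L :=
  exists_vars param_vars (bigAnd N (fun q => literal (S q) (rename (block_shift q) phi))).

Lemma block_shift_inj (q : nat) : (q < N)%N -> injective (block_shift q).
Proof.
move=> hq v1 v2; have : (q * n + n <= N * n)%N by rewrite -mulSnr leq_mul2r hq orbT.
by rewrite /block_shift; do 2 case: ifP; lia.
Qed.

Lemma mem_param_vars (v : nat) : (n <= v < n + W)%N -> (N * n + v)%N \in param_vars.
Proof.
move=> /andP[h1 h2]; rewrite (_ : (N * n + v = N * n + n + (v - n))%N); last by lia.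
by rewrite mem_map ?mem_iota; [lia | exact: addnI].
Qed.

Lemma param_vars_ge (v : nat) : v \in param_vars -> (N * n + n <= v)%N.
Proof. by case/mapP => k _ ->; apply: leq_addr. Qed.

Lemma fv_in_pattern_formula : fv_in (fun v => v < N * n)%N pattern_formula.
Proof.
apply: fv_in_exists_vars; apply: fv_in_bigAnd => q hq; apply: fv_in_literal.
have qn : (q * n + n <= N * n)%N by rewrite -mulSnr leq_mul2r hq orbT.
apply: fv_in_rename phi_fv => v hv; rewrite /block_shift.
case: ifP => hvn; first by apply/orP; right; lia.
by rewrite mem_param_vars //; apply/andP; split; lia.
Qed.

Lemma holds_pattern_formula (t : nat -> R) :
  holds (seq_env a (mkseq t N)) pattern_formula <-> realizes_pattern phi N t S.
Proof.
have copy_spec f q : (q < N)%N ->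
    holds (override (seq_env a (mkseq t N)) param_vars f) (rename (block_shift q) phi) <->
    holds (tup_env (a (t q)) (fun k => f (N * n + n + k)%N)) phi.
  move=> hq; have qn : (q * n + n <= N * n)%N by rewrite -mulSnr leq_mul2r hq orbT.
  rewrite holds_rename; last exact: block_shift_inj.
  apply: holds_agree phi_fv _ => v hv; rewrite /block_shift /override /=.
  case: (ltnP v n) => hvn.
    rewrite ifF; last by apply/negbTE/negP => /param_vars_ge; lia.
    by rewrite seq_env_nth ?size_mkseq // nth_mkseq // tup_env_lt.
  rewrite mem_param_vars ?hvn // tup_env_ge //; congr f; lia.
rewrite holds_exists_vars; split=> [[f /holds_bigAnd Hf] | [w Hw]].
  by exists (fun k => f (N * n + n + k)%N) => q hq; rewrite -copy_spec //; apply/holds_literal/Hf.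
exists (fun x => w (x - (N * n + n))%N); apply/holds_bigAnd => q hq.
by apply/holds_literal; rewrite copy_spec //; under eq_fun do rewrite addKn; apply: Hw.
Qed.

Lemma realizes_pattern_transfer (u t : nat -> R) :
  indiscernible_segment a -> increasing_in01 N u -> increasing_in01 N t ->
  realizes_pattern phi N u S -> realizes_pattern phi N t S.
Proof.
move=> HI /increasing_in01_mkseq [u_sorted u01] /increasing_in01_mkseq [t_sorted t01].
rewrite -!holds_pattern_formula.
have := HI pattern_formula (mkseq u N) (mkseq t N); rewrite !size_mkseq.
by move=> /(_ erefl fv_in_pattern_formula u_sorted t_sorted u01 t01) [].
Qed.

End PatternFormula.
End Patterns.

Lemma in01_between (R : realType) (x y z : R) :
  in01 x -> in01 z -> x <= y <= z -> in01 y.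
Proof.
move=> /andP[x0 _] /andP[_ z1] /andP[xy yz].
by rewrite /in01 (le_trans x0 xy) (le_trans yz z1).
Qed.

Lemma increasing_in01_nth_sort (R : realType) (N : nat) (s : seq R) :
  uniq s -> size s = N -> all (@in01 R) s ->
  increasing_in01 N (nth 0 (sort <=%R s)) /\
  forall l, (l < N)%N -> nth 0 (sort <=%R s) l \in s.
Proof.
move=> s_uniq s_size s01; have size_sort_s : size (sort <=%R s) = N by rewrite size_sort.
have nth_in l : (l < N)%N -> nth 0 (sort <=%R s) l \in s.
  by move=> hl; rewrite -(mem_sort <=%R); apply: mem_nth; rewrite size_sort_s.
split=> //; split=> [j hj | j hj]; last exact: (allP s01 _ (nth_in j hj)).
have : sorted <%R (sort <=%R s) by rewrite lt_sorted_uniq_le sort_uniq s_uniq sort_le_sorted.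
by move/(sortedP 0) => /(_ j); apply; rewrite size_sort_s.
Qed.

Lemma In_leq_sumn (s : seq nat) (x : nat) : List.In x s -> (x <= sumn s)%N.
Proof.
elim: s => [|y s IH] //= [-> | /IH]; first exact: leq_addr.
by move/leq_trans; apply; apply: leq_addl.
Qed.

Definition to_one (R : realType) (p : nat) : R := 1 - p.+2%:R^-1.

Lemma increasing_in01_to_one (R : realType) (N : nat) : increasing_in01 N (@to_one R).
Proof.
split=> j _; first by rewrite /to_one ltrD2l ltrN2 ltf_pV2 ?posrE ?ltr0n // ltr_nat.
rewrite /in01 /to_one subr_ge0 gerDl oppr_le0 invr_ge0 ler0n andbT.
by rewrite invf_le1 ?ltr0n // ler1n.
Qed.

(* [lebesgue_measure] is defined on all sets, as the outer measure, hence monotone there. *)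
Lemma lebesgue_measure_le (R : realType) (A B : set R) :
  A `<=` B -> (lebesgue_measure A <= lebesgue_measure B)%E.
Proof.
by move=> AB; rewrite /lebesgue_measure /lebesgue_stieltjes_measure /measure_extension;
  apply: le_outer_measure.
Qed.

Lemma lebesgue_null_misses_itv (R : realType) (X : set R) (x y : R) :
  x < y -> lebesgue_measure X = 0%E -> exists2 j, x < j < y & ~ X j.
Proof.
move=> xy X0; apply: contrapT => noj.
have itv_sub : [set` `]x, y[] `<=` X.
  by move=> j /=; rewrite in_itv /= => jxy; apply: contrapT => nXj; apply: noj; exists j.
have := lebesgue_measure_le itv_sub; rewrite X0 lebesgue_measure_itv /= lte_fin xy.
by rewrite -EFinB lee_fin subr_le0 leNgt xy.
Qed.

Section Shattering.
Variables (R : realType) (L : signature) (M : structure L).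
Variables (n : nat) (a : R -> 'I_n -> M) (phi : formula L).

Lemma null_gaps_realize_patterns (e : nat -> M) (N : nat) (p : nat -> R) :
  lebesgue_measure [set i : R | in01 i /\ holds (tup_env (a i) e) phi] = 0%E ->
  increasing_in01 N.+1 p -> (forall l, (l <= N)%N -> holds (tup_env (a (p l)) e) phi) ->
  forall S, exists2 u, increasing_in01 N u & realizes_pattern a phi N u S.
Proof.
move=> null [p_inc p01] p_holds S.
have /boolp.choice [g g_spec] : forall l, exists j : R, (l < N)%N ->
    p l < j < p l.+1 /\ ~ holds (tup_env (a j) e) phi.
  move=> l; case: (ltnP l N) => hl; last by exists 0.
  have [j pj nXj] := lebesgue_null_misses_itv (p_inc l hl) null.
  exists j => _; split=> // hj; apply: nXj; split=> //.
  case/andP: pj => /ltW pj_le /ltW jp_le.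
  by apply: (in01_between (p01 l (ltnW hl)) (p01 l.+1 hl)); rewrite pj_le jp_le.
pose u j := if S j then p j else g j.
have u_bounds j : (j < N)%N -> p j <= u j < p j.+1.
  move=> hj; have [/andP[pg gp] _] := g_spec j hj.
  by rewrite /u; case: (S j); rewrite ?lexx ?p_inc // ltW.
exists u; first split=> j hj.
- have /andP[_ uj_lt] := u_bounds j (ltnW hj); have /andP[p_le _] := u_bounds j.+1 hj.
  exact: lt_le_trans uj_lt p_le.
- have /andP[pu /ltW up] := u_bounds j hj.
  by apply: (in01_between (p01 j (ltnW hj)) (p01 j.+1 hj)); rewrite pu up.
exists e => q hq; rewrite /u; case: (S q); split=> //.
- by move=> _; apply: p_holds; apply: ltnW.
- by case: (g_spec q hq).
Qed.

(* Every row of the array is [phi] with its two blocks of variables exchanged by [swap]: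
   the parameters of [phi] play the role of the tuple [x] of the definition. *)
Lemma shattering_not_strongly_dependent (W : nat) :
  fv_in (fun v => v < n + W)%N phi ->
  (forall N S (t : nat -> R), increasing_in01 N t -> realizes_pattern a phi N t S) ->
  ~ strongly_dependent M.
Proof.
move=> phi_fv shatter.
pose swap v := if (v < n)%N then (W + v)%N else if (v < n + W)%N then (v - n)%N else v.
have swap_inj : injective swap by move=> v1 v2; rewrite /swap; repeat case: ifP => ?; lia.
pose code al i := CodeSeq.code [:: al; i].
have code_inj al i al' i' : code al i = code al' i' -> al = al' /\ i = i'.
  by move=> /(can_inj CodeSeq.codeK) [-> ->].
apply; exists W, (fun _ => n), (fun _ => rename swap phi), (fun al i => a (to_one R (code al i))).
split=> [al | eta F].
  by apply: fv_in_rename phi_fv => v hv; rewrite /swap; repeat case: ifP => ?; lia.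
pose N := (sumn (map (fun j => code j.1 j.2) F)).+1.
pose S k := `[< exists al, k = code al (eta al) >].
have [w w_pattern] := shatter N S _ (increasing_in01_to_one R N).
exists (fun k : 'I_W => w k) => -[al i] /(List.in_map (fun j => code j.1 j.2)) /In_leq_sumn ij.
have row_spec : holds (tup_env (fun k : 'I_W => w k)
      (tup_env (a (to_one R (code al i))) (fun=> dflt M))) (rename swap phi) <-> S (code al i).
  rewrite holds_rename // -(w_pattern _ ij); apply: holds_agree phi_fv _ => v hv; rewrite /swap /=.
  case: (ltnP v n) => hvn; first by rewrite tup_env_ge ?leq_addr // addKn !tup_env_lt.
  by rewrite hv tup_env_lt ?tup_env_ge //; lia.
rewrite /=; case: eqP => [ieta | ne]; first by apply/row_spec/asboolP; exists al; rewrite ieta.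
by move=> /row_spec /asboolP [al' /code_inj [<- eqi]]; apply: ne.
Qed.

End Shattering.

Unset Implicit Arguments.

Theorem lemma3p4 (R : realType) (L : signature) (M : structure L)
  (Hmonster : monster R M) (Hsd : strongly_dependent M)
  (n m : nat) (a : R -> 'I_n -> M) (HI : indiscernible_segment a)
  (phi : formula L) (c : nat -> M)
  (Hmu : forall b : 'I_m -> M, avg_measure a phi c b = 0%E) :
  exists k : nat, forall s : seq R,
    uniq s -> size s = k -> all (@in01 R) s ->
    ~ exists b : 'I_m -> M,
        forall i, i \in s -> holds (tup_env (a i) (tup_env b c)) phi.
Proof.
apply: contrapT => not_inconsistent.
have [W phi_fv] : exists W, fv_in (fun v => v < n + W)%N phi.
  by have [W HW] := fv_in_bounded phi; exists W; apply: fv_in_leq HW; apply: leq_addl.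
apply: (shattering_not_strongly_dependent (a := a) phi_fv _ Hsd) => N S t t_inc.
have [s [s_uniq s_size s01 [b s_holds]]] : exists s : seq R,
    [/\ uniq s, size s = N.+1, all (@in01 R) s &
    exists b : 'I_m -> M, forall i, i \in s -> holds (tup_env (a i) (tup_env b c)) phi].
  apply: contrapT => no_s; apply: not_inconsistent; exists N.+1 => s ? ? ? ?.
  by apply: no_s; exists s.
have [p_inc p_in_s] := increasing_in01_nth_sort s_uniq s_size s01.
have [u u_inc u_S] :=
  null_gaps_realize_patterns (Hmu b) p_inc (fun l hl => s_holds _ (p_in_s l hl)) S.
exact: (realizes_pattern_transfer (a := a) phi_fv HI u_inc t_inc u_S).
Qed.
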